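(* Let $\mathbb{F}\subseteq\mathbb{C}$ be a subfield closed under complex conjugation, $m\ge2$, $N\ge1$, and let $\zeta_1,\dots,\zeta_{m-1}\in\mathcal{P}_N^-[\mathbb{F}]$. Let $\mathbf{u}(z)=(u_1(z),\dots,u_{m-1}(z),\widetilde{u_m}(z))^T$ and $\mathbf{v}(z)=(v_1(z),\dots,v_{m-1}(z),\widetilde{v_m}(z))^T$, with all $u_i,v_i\in\mathcal{P}_N^+[\mathbb{F}]$, be two (possibly equal) solutions of the system $(\mathcal{S})$. Then $$\sum_{i=1}^{m-1}u_i(z)\widetilde{v_i}(z)+\widetilde{u_m}(z)v_m(z)$$ is constant on $\mathbb{C}\setminus\{0\}$.
   Context: For a Laurent polynomial $p(z)=\sum_k c_kz^k$ write $\widetilde{p}(z)=\sum_k\overline{c_k}z^{-k}$. $\mathcal{P}_N^+[\mathbb{F}]=\{\sum_{k=0}^Nc_kz^k: c_k\in\mathbb{F}\}$, $\mathcal{P}_N^-[\mathbb{F}]=\{\sum_{k=1}^Nc_kz^{-k}: c_k\in\mathbb{F}\}$. Let $\mathcal{P}^+$ denote the set of polynomials in $z$ (Laurent polynomials with no negative powers). The system $(\mathcal{S})$ in unknowns $x_1,\dots,x_m$ is $$\zeta_i(z)x_m(z)-\widetilde{x_i}(z)\in\mathcal{P}^+\ (i=1,\dots,m-1),\qquad \sum_{i=1}^{m-1}\zeta_i(z)x_i(z)+\widetilde{x_m}(z)\in\mathcal{P}^+.$$ A vector $(u_1,\dots,u_{m-1},\widetilde{u_m})^T$ with $u_i\in\mathcal{P}_N^+[\mathbb{F}]$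 is called a solution of $(\mathcal{S})$ if all these conditions hold with $x_i=u_i$, $i=1,\dots,m$. *)

From mathcomp Require Import all_boot all_algebra complex.
From mathcomp Require Import Rstruct.
Set Implicit Arguments. Unset Strict Implicit. Unset Printing Implicit Defensive.
Import GRing.Theory Num.Theory.
Local Open Scope ring_scope.

Notation CC := (Rdefinitions.R[i]).

(* A Laurent polynomial is represented as a pair (p, s) standing for
   z^(-s) * p(z), with p a polynomial in z. *)
Record laurent := Laurent { lnum : {poly CC}; lshift : nat }.

Definition lcoef (L : laurent) (k : int) : CC :=
  match (k + (lshift L)%:Z)%R with
  | Posz j => (lnum L)`_j
  | Negz _ => 0
  end.

(* value at z (meaningful for z <> 0) *)
Definition leval (L : laurent) (z : CC) : CC := (lnum L).[z] / z ^+ lshift L.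

Definition lpoly (p : {poly CC}) : laurent := Laurent p 0.
Definition lzero : laurent := lpoly 0.
Definition ladd (L M : laurent) : laurent :=
  Laurent (lnum L * 'X^(lshift M) + lnum M * 'X^(lshift L)) (lshift L + lshift M).
Definition lopp (L : laurent) : laurent := Laurent (- lnum L) (lshift L).
Definition lsub (L M : laurent) : laurent := ladd L (lopp M).
Definition lmul (L M : laurent) : laurent :=
  Laurent (lnum L * lnum M) (lshift L + lshift M).

(* tilde: sum_k c_k z^k  |->  sum_k conj(c_k) z^(-k) *)
Definition ltilde (L : laurent) : laurent :=
  let n := size (lnum L) in
  Laurent (\sum_(k < n) ((lnum L)`_k)^* *: 'X^(lshift L + (n - k))) n.

Definition inPplus (L : laurent) : Prop := forall k : nat, lcoef L (Negz k) = 0.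

Definition inPplusN (N : nat) (F : {pred CC}) (p : {poly CC}) : Prop :=
  (size p <= N.+1)%N /\ forall k : nat, p`_k \in F.

Definition inPminusN (N : nat) (F : {pred CC}) (L : laurent) : Prop :=
  (forall k : int, lcoef L k != 0 -> (- (N%:Z) <= k <= -1)%R)
  /\ forall k : int, lcoef L k \in F.

(* (u_1,...,u_{m-1}, ~u_m) is a solution of (S); u : 'I_(m-1) -> poly gives
   u_1..u_{m-1} and um gives u_m. *)
Definition is_solution (m N : nat) (F : {pred CC}) (zeta : 'I_(m - 1) -> laurent)
    (u : 'I_(m - 1) -> {poly CC}) (um : {poly CC}) : Prop :=
  [/\ forall i, inPplusN N F (u i),
      inPplusN N F um,
      forall i, inPplus (lsub (lmul (zeta i) (lpoly um)) (ltilde (lpoly (u i))))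
    & inPplus (ladd (\big[ladd/lzero]_(i < m - 1) lmul (zeta i) (lpoly (u i)))
                    (ltilde (lpoly um)))].

From mathcomp Require Import all_boot all_algebra complex.
From mathcomp Require Import Rstruct.
From mathcomp Require Import zify ring.
Set Implicit Arguments. Unset Strict Implicit. Unset Printing Implicit Defensive.
Import GRing.Theory Num.Theory.
Local Open Scope ring_scope.

(* Write W(u,v) := sum_i u_i ~v_i + ~u_m v_m ([pairing]).  Inserting the relations of (S) for v
   (zeta_i v_m - ~v_i = C_i) and for u (sum_i zeta_i u_i + ~u_m = B), with C_i
   and B polynomials, turns W(u,v) into the polynomial B v_m - sum_i u_i C_i.
   By symmetry W(v,u) is a polynomial too, and W(u,v)(z) is the conjugate of
   W(v,u)(1/conj z), so W(u,v) is also a polynomial in 1/z, hence constant.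
   Only the P^+ conditions of (S) are used. *)

Section PolyOnPuncturedPlane.
Variable R : numFieldType.
Implicit Types p q : {poly R}.

Lemma poly_eq_on_nonzero p q :
  (forall z, z != 0 -> p.[z] = q.[z]) -> p = q.
Proof.
move=> eq_pq; apply/eqP; rewrite -subr_eq0; apply/eqP.
apply: (@roots_geq_poly_eq0 _ _ [seq i.+1%:R | i <- iota 0 (size (p - q))]).
- apply/allP => _ /mapP [i _ ->].
  by rewrite /root hornerD hornerN eq_pq ?subrr // pnatr_eq0.
- by rewrite map_inj_uniq ?iota_uniq // => i j /eqP; rewrite eqr_nat => /eqP [].
- by rewrite size_map size_iota.
Qed.

Lemma poly_horner_inv_const p q :
  (forall z, z != 0 -> p.[z] = q.[z^-1]) -> p = (p`_0)%:P.
Proof.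
move=> pq; apply: size1_polyC.
pose d := size q; pose r := \sum_(k < d) q`_k *: 'X^(d - k).
have pXd : p * 'X^d = r.
  apply: poly_eq_on_nonzero => z z0.
  rewrite hornerM hornerXn pq // (horner_coef _ z^-1) mulr_suml horner_sum.
  by apply: eq_bigr => k _; rewrite hornerZ hornerXn expfB // exprVn mulrAC -mulrA.
have size_r : (size r <= d.+1)%N.
  apply: (leq_trans (size_sum _ _ _)); apply/bigmax_leqP => k _.
  by rewrite (leq_trans (size_scale_leq _ _)) // size_polyXn ltnS leq_subr.
have [->|p0] := eqVneq p 0; first by rewrite size_poly0.
by move: size_r; rewrite -pXd size_mulXn //; lia.
Qed.

End PolyOnPuncturedPlane.

Section Pairing.
Variables (C : numClosedFieldType) (n : nat).
Implicit Types (p : {poly C}) (u v : 'I_n -> {poly C}) (um vm : {poly C}).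

Definition tilde p (z : C) : C := (map_poly Num.conj p).[z^-1].

Definition pairing u v um vm (z : C) : C :=
  \sum_i (u i).[z] * tilde (v i) z + tilde um z * vm.[z].

Lemma conjC_tilde p z : (tilde p z)^* = p.[(z^*)^-1].
Proof.
rewrite /tilde -horner_map /= -map_poly_comp fmorphV.
by rewrite (eq_map_poly (g := id)) ?map_poly_id // => x; exact: conjCK.
Qed.

Lemma conjC_horner p z : (p.[z])^* = tilde p (z^*)^-1.
Proof. by rewrite /tilde invrK -horner_map. Qed.

Lemma pairing_conj u v um vm z :
  pairing u v um vm z = (pairing v u vm um (z^*)^-1)^*.
Proof.
have conj_inv : (((z^*)^-1)^*)^-1 = z by rewrite fmorphV invrK; exact: conjCK.
rewrite /pairing rmorphD rmorph_sum rmorphM /= conjC_tilde conjC_horner conj_inv.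
congr (_ + _); last exact: mulrC.
by apply: eq_bigr => i _; rewrite rmorphM /= conjC_tilde conjC_horner conj_inv mulrC.
Qed.

(* Substituting [~v_i = ze_i vm - C_i] and [~um = B - sum_i ze_i u_i] makes
   the terms [ze_i u_i vm] cancel. *)
Lemma pairing_solution (ze : 'I_n -> C) u v um vm (B : {poly C})
    (Cs : 'I_n -> {poly C}) z :
  \sum_i ze i * (u i).[z] + tilde um z = B.[z] ->
  (forall i, ze i * vm.[z] - tilde (v i) z = (Cs i).[z]) ->
  pairing u v um vm z = (B * vm - \sum_i u i * Cs i).[z].
Proof.
move=> eqB eqCs.
have tilde_um : tilde um z = B.[z] - \sum_i ze i * (u i).[z].
  by rewrite -eqB addrC addKr.
have tilde_v i : tilde (v i) z = ze i * vm.[z] - (Cs i).[z].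
  by rewrite -eqCs opprB addrC subrK.
rewrite /pairing tilde_um.
rewrite (eq_bigr (fun i => ze i * (u i).[z] * vm.[z] - (u i).[z] * (Cs i).[z])).
  rewrite sumrB -mulr_suml hornerD hornerN hornerM horner_sum.
  under [X in _ = _ - X]eq_bigr => i _ do rewrite hornerM.
  ring.
by move=> i _; rewrite tilde_v mulrBr mulrCA mulrA.
Qed.

Lemma pairing_poly_const u v um vm (P Q : {poly C}) :
  (forall z, z != 0 -> pairing u v um vm z = P.[z]) ->
  (forall z, z != 0 -> pairing v u vm um z = Q.[z]) ->
  forall z, z != 0 -> pairing u v um vm z = P`_0.
Proof.
move=> pairingP pairingQ z z0.
suff P_const : P = (P`_0)%:P by rewrite pairingP // {1}P_const hornerC.
apply: (poly_horner_inv_const (q := map_poly Num.conj Q)) => w w0.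
rewrite -pairingP // pairing_conj pairingQ; last by rewrite invr_eq0 conjC_eq0.
by rewrite -horner_map fmorphV; congr (_.[_^-1]); exact: conjCK.
Qed.

End Pairing.

Lemma leval_ladd L M z : z != 0 -> leval (ladd L M) z = leval L z + leval M z.
Proof.
move=> z0; rewrite /leval /= hornerD !hornerM !hornerXn exprD.
by field; rewrite ?expf_neq0.
Qed.

Lemma leval_lmul L M z : z != 0 -> leval (lmul L M) z = leval L z * leval M z.
Proof.
move=> z0; rewrite /leval /= hornerM exprD.
by field; rewrite ?expf_neq0.
Qed.

Lemma leval_lsub L M z : z != 0 -> leval (lsub L M) z = leval L z - leval M z.
Proof. by move=> z0; rewrite leval_ladd // /leval /= hornerN mulNr. Qed.

Lemma leval_lpoly p z : leval (lpoly p) z = p.[z].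
Proof. by rewrite /leval /= expr0 divr1. Qed.

Lemma leval_big n (L : 'I_n -> laurent) z : z != 0 ->
  leval (\big[ladd/lzero]_(i < n) L i) z = \sum_(i < n) leval (L i) z.
Proof.
move=> z0; have leval0 : leval lzero z = 0 by rewrite leval_lpoly horner0.
exact: (big_morph (leval^~ z) (fun M M' => @leval_ladd M M' z z0) leval0).
Qed.

Lemma leval_ltilde p z : z != 0 -> leval (ltilde (lpoly p)) z = tilde p z.
Proof.
move=> z0; rewrite /leval /tilde /= horner_sum (horner_coef _ z^-1) size_map_poly.
rewrite mulr_suml; apply: eq_bigr => i _.
rewrite hornerZ hornerXn coef_map /= add0n expfB // exprVn.
by field; rewrite ?expf_neq0.
Qed.

Lemma inPplus_leval_poly L : inPplus L ->
  exists q : {poly CC}, forall z, z != 0 -> leval L z = q.[z].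
Proof.
case: L => p s /= negative0; exists (drop_poly s p) => z z0.
have take0 : take_poly s p = 0.
  apply/polyP => i; rewrite coef_take_poly coef0; case: ifP => // lt_is.
  have := negative0 (s - i.+1)%N; rewrite /lcoef /=.
  by have -> : (Negz (s - i.+1) + Posz s = Posz i)%R by rewrite NegzE; lia.
rewrite /leval /= -{1}(poly_take_drop s p) take0 add0r hornerM hornerXn.
by rewrite mulfK // expf_neq0.
Qed.

Lemma leval_pairing m (u v : 'I_m -> {poly CC}) um vm z : z != 0 ->
  leval (ladd (\big[ladd/lzero]_(i < m) lmul (lpoly (u i)) (ltilde (lpoly (v i))))
              (lmul (ltilde (lpoly um)) (lpoly vm))) z = pairing u v um vm z.
Proof.
move=> z0; rewrite leval_ladd // leval_big // leval_lmul // leval_lpoly leval_ltilde //.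
by congr (_ + _); apply: eq_bigr => i _; rewrite leval_lmul // leval_lpoly leval_ltilde.
Qed.

Lemma solutions_pairing_poly m N F (zeta : 'I_(m - 1) -> laurent) u um v vm :
  is_solution N F zeta u um -> is_solution N F zeta v vm ->
  exists P : {poly CC}, forall z, z != 0 -> pairing u v um vm z = P.[z].
Proof.
case=> _ _ _ /inPplus_leval_poly [B eqB] [_ _ solv _].
have [Cs eqCs] := fin_all_exists (fun i => inPplus_leval_poly (solv i)).
exists (B * vm - \sum_i u i * Cs i) => z z0.
apply: (pairing_solution (ze := fun i => leval (zeta i) z)).
  rewrite -eqB // leval_ladd // leval_big // leval_ltilde //; congr (_ + _).
  by apply: eq_bigr => i _; rewrite leval_lmul // leval_lpoly.
by move=> i; rewrite -eqCs // leval_lsub // leval_lmul // leval_lpoly leval_ltilde.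
Qed.

Theorem lemma3 (F : {pred CC}) (m N : nat)
  (HF : GRing.divring_closed F)
  (HFconj : forall x : CC, x \in F -> x^* \in F)
  (Hm : (2 <= m)%N) (HN : (1 <= N)%N)
  (zeta : 'I_(m - 1) -> laurent)
  (Hzeta : forall i, inPminusN N F (zeta i))
  (u v : 'I_(m - 1) -> {poly CC}) (um vm : {poly CC})
  (Hu : is_solution N F zeta u um)
  (Hv : is_solution N F zeta v vm) :
  exists c : CC, forall z : CC, z != 0 ->
    leval (ladd (\big[ladd/lzero]_(i < m - 1) lmul (lpoly (u i)) (ltilde (lpoly (v i))))
                (lmul (ltilde (lpoly um)) (lpoly vm))) z = c.
Proof.
have [P pairingP] := solutions_pairing_poly Hu Hv.
have [Q pairingQ] := solutions_pairing_poly Hv Hu.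
exists P`_0 => z z0.
by rewrite leval_pairing //; apply: (pairing_poly_const pairingP pairingQ).
Qed.
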